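(* Let $G$ be an infinite connected simple undirected graph with vertex degrees bounded by $v<\infty$ and internal scaling dimension $D$ (i.e. $D_S(x)=D$ for all vertices $x$). Fix an integer $l_0\ge 1$ and let $\hat G_{cl}$ be the purified clique graph with overlap threshold $l_0$. Then for every clique $C$ of $G$ the upper internal scaling dimension of $\hat G_{cl}$ at $C$ satisfies $\overline{D}_S^{\hat G_{cl}}(C)\le D$.
   Context: Graphs are simple and undirected with graph metric $d$. For a vertex $x$ of a graph $H$, $U_n(x)$ is the ball of radius $n$ in $H$, $D_n(x)=\ln(\#U_n(x))/\ln n$, $\underline D_S(x)=\liminf_n D_n(x)$, $\overline D_S(x)=\limsup_n D_n(x)$; if these agree the value is $D_S(x)$, and $H$ has internal scaling dimension $D$ if $D_S(x)=D$ for all $x$. A clique of $G$ is a maximal complete subgraph. The purified clique graph $\hat G_{cl}$ with threshold $l_0$ has the cliques of $G$ as vertices, two distinct cliques $C,C'$ being adjacent iff $\#(C\cap C')\ge l_0$. *)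

From Stdlib Require Import Reals List ClassicalEpsilon.
From Coquelicot Require Import Coquelicot.
Open Scope R_scope.

Fixpoint reach {T : Type} (adj : T -> T -> Prop) (n : nat) (x y : T) : Prop :=
  match n with
  | O => x = y
  | S m => reach adj m x y \/ exists z, reach adj m x z /\ adj z y
  end.

Definition ball_n {T : Type} (adj : T -> T -> Prop) (x : T) (n : nat) : T -> Prop :=
  fun y => reach adj n x y.

Definition has_card {T : Type} (P : T -> Prop) (k : nat) : Prop :=
  exists l : list T, NoDup l /\ length l = k /\ forall y, P y <-> In y l.

(* Cardinality #P of a (finite) set P (unspecified if P is infinite). *)
Definition ncard {T : Type} (P : T -> Prop) : nat :=
  epsilon (inhabits 0%nat) (fun k => has_card P k).

Definition Dn {T : Type} (adj : T -> T -> Prop) (x : T) (n : nat) : R :=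
  ln (INR (ncard (ball_n adj x n))) / ln (INR n).

Definition upper_DS {T : Type} (adj : T -> T -> Prop) (x : T) : Rbar :=
  LimSup_seq (Dn adj x).
Definition lower_DS {T : Type} (adj : T -> T -> Prop) (x : T) : Rbar :=
  LimInf_seq (Dn adj x).

Definition has_internal_scaling_dim {T : Type} (adj : T -> T -> Prop) (D : R) : Prop :=
  forall x, lower_DS adj x = Finite D /\ upper_DS adj x = Finite D.

Definition simple_graph {T : Type} (adj : T -> T -> Prop) : Prop :=
  (forall x y, adj x y -> adj y x) /\ (forall x, ~ adj x x).

Definition connected_graph {T : Type} (adj : T -> T -> Prop) : Prop :=
  forall x y, exists n, reach adj n x y.

Definition infinite_type (T : Type) : Prop :=
  ~ exists l : list T, forall x, In x l.

Definition degree_bounded {T : Type} (adj : T -> T -> Prop) (v : nat) : Prop :=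
  forall x, exists l : list T, (length l <= v)%nat /\ forall y, adj x y -> In y l.

Definition complete_set {T : Type} (adj : T -> T -> Prop) (C : T -> Prop) : Prop :=
  forall x y, C x -> C y -> x <> y -> adj x y.

Definition is_clique {T : Type} (adj : T -> T -> Prop) (C : T -> Prop) : Prop :=
  complete_set adj C /\
  forall C' : T -> Prop, complete_set adj C' -> (forall x, C x -> C' x) ->
    forall x, C' x -> C x.

(* Purified clique graph with threshold l0: vertices are the cliques of G
   (as elements of T -> Prop), distinct cliques adjacent iff #(C ∩ C') >= l0. *)
Definition purified_clique_adj {T : Type} (adj : T -> T -> Prop) (l0 : nat)
    (C C' : T -> Prop) : Prop :=
  is_clique adj C /\ is_clique adj C' /\ C <> C' /\
  (l0 <= ncard (fun x => C x /\ C' x))%nat.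

(* Fix a vertex x0 of the clique C. Cliques adjacent in the purified clique graph share a
   vertex, so every clique within distance n of C lies in the G-ball of radius n+1 about x0.
   A clique meeting a vertex y is contained in {y} together with the at most v neighbours
   of y, so it is one of at most 2^(v+1) subsets there. Hence
   #U_n(C) <= 2^(v+1) #U_(n+1)(x0), and the constant factor and the shift n -> n+1 both
   disappear in ln(.)/ln n, giving limsup D_n(C) <= limsup D_n(x0) = D. *)
From Stdlib Require Import Reals.
From Coquelicot Require Import Coquelicot.
From Stdlib Require Import List Lia Lra Classical FunctionalExtensionality
  PropExtensionality ClassicalEpsilon.
Import ListNotations.
Open Scope R_scope.

Definition finite_pred {T : Type} (P : T -> Prop) : Prop :=
  exists l : list T, forall y, P y -> In y l.

Lemma has_card_unique {T : Type} (P : T -> Prop) k1 k2 :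
  has_card P k1 -> has_card P k2 -> k1 = k2.
Proof.
  intros [l1 [N1 [<- H1]]] [l2 [N2 [<- H2]]].
  apply Nat.le_antisymm; apply NoDup_incl_length; auto; intros y Hy; firstorder.
Qed.

Lemma ncard_eq {T : Type} (P : T -> Prop) k : has_card P k -> ncard P = k.
Proof.
  intro Hk. apply (has_card_unique P); [|exact Hk].
  apply (epsilon_spec (inhabits 0%nat) (fun k => has_card P k)). now exists k.
Qed.

Lemma has_card_incl_list {T : Type} (l : list T) (P : T -> Prop) :
  (forall y, P y -> In y l) -> exists k, (k <= length l)%nat /\ has_card P k.
Proof.
  revert P; induction l as [|a l IH]; intros P HP.
  - exists 0%nat. split; [simpl; lia|]. exists nil. repeat split; [constructor|..].
    + intro Py. now apply (HP y).
    + intros [].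
  - destruct (IH (fun y => P y /\ y <> a)) as [k [Hk [l' [Nd [Ln Hl]]]]].
    { intros y [Py Hya]. destruct (HP y Py); [congruence|auto]. }
    destruct (classic (P a)) as [Pa|nPa].
    + exists (S k). split; [simpl; lia|]. exists (a :: l'). repeat split.
      * constructor; auto. intro Hin. apply Hl in Hin. tauto.
      * simpl; lia.
      * intro Py. destruct (classic (y = a)); [left; auto|right; apply Hl; auto].
      * intros [<-|Hin]; [auto|apply Hl in Hin; tauto].
    + exists k. split; [simpl; lia|]. exists l'. repeat split; auto.
      * intro Py. apply Hl. split; [auto|intros ->; tauto].
      * intro Hin. now apply Hl.
Qed.

Lemma ncard_le_length {T : Type} (l : list T) (P : T -> Prop) :
  (forall y, P y -> In y l) -> (ncard P <= length l)%nat.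
Proof.
  intro HP. destruct (has_card_incl_list l P HP) as [k [Hk Hc]].
  now rewrite (ncard_eq _ _ Hc).
Qed.

Lemma has_card_ncard {T : Type} (P : T -> Prop) : finite_pred P -> has_card P (ncard P).
Proof.
  intros [l Hl]. destruct (has_card_incl_list l P Hl) as [k [_ Hc]].
  now rewrite (ncard_eq _ _ Hc).
Qed.

Lemma ncard_pos {T : Type} (P : T -> Prop) x : finite_pred P -> P x -> (1 <= ncard P)%nat.
Proof.
  intros Hfin Px. destruct (has_card_ncard P Hfin) as [[|y l] [_ [<- Hl]]].
  - now apply Hl in Px.
  - simpl; lia.
Qed.

Lemma ncard_pos_inhabited {T : Type} (P : T -> Prop) : (1 <= ncard P)%nat -> exists w, P w.
Proof.
  intro Hpos. apply NNPP. intro Hempty.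
  assert (H0 : has_card P 0) by (exists nil; firstorder using NoDup_nil).
  rewrite (ncard_eq _ _ H0) in Hpos. lia.
Qed.

Fixpoint sublists {A : Type} (l : list A) : list (list A) :=
  match l with
  | nil => [nil]
  | a :: l => sublists l ++ map (cons a) (sublists l)
  end.

Lemma length_sublists {A : Type} (l : list A) : length (sublists l) = (2 ^ length l)%nat.
Proof. induction l; simpl; auto. rewrite length_app, length_map, IHl. lia. Qed.

Lemma sublists_filter {A : Type} (l : list A) (K : A -> Prop) :
  exists s, In s (sublists l) /\ forall y, In y s <-> In y l /\ K y.
Proof.
  induction l as [|a l [s [Hs Hsp]]].
  - exists nil. simpl. tauto.
  - destruct (classic (K a)) as [Ka|nKa].
    + exists (a :: s). split.
      * apply in_or_app. right. now apply in_map.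
      * intro y. simpl. rewrite Hsp. split; [intros [<-|[]]|intros [[<-|] ]]; auto.
    + exists s. split; [apply in_or_app; auto|].
      intro y. simpl. rewrite Hsp. split; [intros []|intros [[<-|] ]]; tauto.
Qed.

Lemma length_flat_map_le {A B : Type} (f : A -> list B) (M : nat) (l : list A) :
  (forall x, (length (f x) <= M)%nat) -> (length (flat_map f l) <= length l * M)%nat.
Proof.
  intro Hf. induction l as [|a l IH]; simpl; auto. rewrite length_app. specialize (Hf a). lia.
Qed.

Section BoundedDegree.

Variables (V : Type) (adj : V -> V -> Prop).

Lemma reach_refl n x : reach adj n x x.
Proof. induction n; simpl; auto. Qed.

Lemma neighbour_list_fun (v : nat) :
  degree_bounded adj v -> exists Nb : V -> list V,
    forall x, (length (Nb x) <= v)%nat /\ forall y, adj x y -> In y (Nb x).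
Proof.
  intro Hdeg. exists (fun x => proj1_sig (constructive_indefinite_description _ (Hdeg x))).
  intro x. exact (proj2_sig (constructive_indefinite_description _ (Hdeg x))).
Qed.

Variables (v : nat) (Nb : V -> list V).
Hypothesis Nb_length : forall x, (length (Nb x) <= v)%nat.
Hypothesis Nb_adj : forall x y, adj x y -> In y (Nb x).

Lemma ball_finite x n : finite_pred (ball_n adj x n).
Proof.
  induction n as [|n [l Hl]].
  - exists [x]. intros y ->. now left.
  - exists (l ++ flat_map Nb l). intros y [Hy|[z [Hz Hzy]]]; apply in_or_app.
    + left. now apply Hl.
    + right. apply in_flat_map. exists z. split; auto.
Qed.

Lemma complete_set_incl_neighbourhood (K : V -> Prop) y :
  complete_set adj K -> K y -> forall z, K z -> In z (y :: Nb y).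
Proof.
  intros HK Ky z Kz. destruct (classic (y = z)) as [<-|Hyz]; [now left|].
  right. apply Nb_adj, HK; auto.
Qed.

(* A complete set containing y is determined by its trace on y :: Nb y. *)
Lemma complete_sets_meeting_listed (B : list V) :
  exists L : list (V -> Prop), (length L <= length B * 2 ^ S v)%nat /\
    forall K, complete_set adj K -> (exists y, K y /\ In y B) -> In K L.
Proof.
  exists (flat_map (fun y => map (fun s z => In z s) (sublists (y :: Nb y))) B). split.
  - apply length_flat_map_le. intro y. rewrite length_map, length_sublists.
    apply Nat.pow_le_mono_r; [lia|]. simpl. specialize (Nb_length y). lia.
  - intros K HK [y [Ky HyB]]. apply in_flat_map. exists y. split; [exact HyB|].
    destruct (sublists_filter (y :: Nb y) K) as [s [Hs Hsp]].
    apply in_map_iff. exists s. split; [|exact Hs].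
    apply functional_extensionality. intro z. apply propositional_extensionality.
    rewrite Hsp. split; [tauto|].
    intro Kz. split; [now apply (complete_set_incl_neighbourhood K y)|exact Kz].
Qed.

End BoundedDegree.

Section CliqueGraph.

Variables (V : Type) (adj : V -> V -> Prop).

Lemma clique_inhabited (K : V -> Prop) : inhabited V -> is_clique adj K -> exists y, K y.
Proof.
  intros [x0] [_ Hmax]. apply NNPP. intro Hempty.
  apply Hempty. exists x0. apply (Hmax (fun z => z = x0)).
  - intros a b -> -> Hab. congruence.
  - intros x Kx. exfalso. eauto.
  - reflexivity.
Qed.

Lemma purified_clique_adj_meet l0 (K K' : V -> Prop) :
  (1 <= l0)%nat -> purified_clique_adj adj l0 K K' -> exists w, K w /\ K' w.
Proof.
  intros Hl0 [_ [_ [_ Hcard]]]. apply ncard_pos_inhabited. lia.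
Qed.

Lemma complete_set_in_ball (K : V -> Prop) x0 m w :
  complete_set adj K -> K w -> reach adj m x0 w -> forall y, K y -> reach adj (S m) x0 y.
Proof.
  intros HK Kw Hw y Ky. destruct (classic (y = w)) as [->|Hyw].
  - now left.
  - right. exists w. split; [exact Hw|]. apply HK; auto.
Qed.

Lemma purified_ball_in_ball l0 (C : V -> Prop) x0 :
  (1 <= l0)%nat -> is_clique adj C -> C x0 ->
  forall n K, ball_n (purified_clique_adj adj l0) C n K ->
    is_clique adj K /\ forall y, K y -> reach adj (S n) x0 y.
Proof.
  intros Hl0 HC Cx0 n. induction n as [|n IH]; intros K HK.
  - simpl in HK. subst K. split; [exact HC|].
    apply (complete_set_in_ball C x0 0 x0); [apply HC|exact Cx0|reflexivity].
  - destruct HK as [HK|[Z [HZ HZK]]].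
    + destruct (IH K HK) as [HKc HKr]. split; [exact HKc|]. intros y Ky. left. now apply HKr.
    + destruct (IH Z HZ) as [_ HZr]. pose proof HZK as [_ [HKc _]]. split; [exact HKc|].
      destruct (purified_clique_adj_meet l0 Z K Hl0 HZK) as [w [Zw Kw]].
      apply (complete_set_in_ball K x0 (S n) w); [apply HKc|exact Kw|now apply HZr].
Qed.

Lemma purified_ball_listed l0 v (C : V -> Prop) x0 n :
  (1 <= l0)%nat -> degree_bounded adj v -> is_clique adj C -> C x0 ->
  exists L : list (V -> Prop),
    (length L <= ncard (ball_n adj x0 (S n)) * 2 ^ S v)%nat /\
    forall K, ball_n (purified_clique_adj adj l0) C n K -> In K L.
Proof.
  intros Hl0 Hdeg HC Cx0.
  destruct (neighbour_list_fun V adj v Hdeg) as [Nb HNb].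
  destruct (has_card_ncard _ (ball_finite V adj Nb (fun x => proj2 (HNb x)) x0 (S n)))
    as [B [_ [LB HB]]].
  destruct (complete_sets_meeting_listed V adj v Nb (fun x => proj1 (HNb x))
              (fun x => proj2 (HNb x)) B) as [L [HLlen HL]].
  exists L. split; [now rewrite <- LB|].
  intros K HK. destruct (purified_ball_in_ball l0 C x0 Hl0 HC Cx0 n K HK) as [HKc HKr].
  apply HL; [apply HKc|].
  destruct (clique_inhabited K (inhabits x0) HKc) as [y Ky].
  exists y. split; [exact Ky|]. apply HB, HKr, Ky.
Qed.

End CliqueGraph.

Lemma LimSup_seq_le_of_eventually (u : nat -> R) (D : R) :
  (forall eps, 0 < eps -> exists N, forall n, (N <= n)%nat -> u n <= D + eps) ->
  Rbar_le (LimSup_seq u) D.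
Proof.
  intro Hev. destruct (ex_LimSup_seq u) as [l Hl]. rewrite (is_LimSup_seq_unique _ _ Hl).
  destruct l as [r| |]; simpl in *; [|exfalso|exact I].
  - apply Rnot_lt_le. intro HDr.
    assert (He : 0 < (r - D) / 2) by lra.
    destruct (Hl (mkposreal _ He)) as [Hfreq _]. destruct (Hev _ He) as [N HN].
    destruct (Hfreq N) as [n [Hn Hun]]. simpl in Hun. specialize (HN n Hn). lra.
  - destruct (Hev 1 Rlt_0_1) as [N HN]. destruct (Hl (D + 1) N) as [n [Hn Hun]].
    specialize (HN n Hn). lra.
Qed.

Lemma eventually_lt_of_LimSup_seq_le (u : nat -> R) (D : R) :
  Rbar_le (LimSup_seq u) D ->
  forall eps, 0 < eps -> exists N, forall n, (N <= n)%nat -> u n < D + eps.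
Proof.
  intros HD eps He. destruct (ex_LimSup_seq u) as [l Hl].
  rewrite (is_LimSup_seq_unique _ _ Hl) in HD.
  destruct l as [r| |]; simpl in HD; [|contradiction|exact (Hl (D + eps))].
  destruct (proj2 (Hl (mkposreal _ He))) as [N HN]. exists N. intros n Hn.
  specialize (HN n Hn). simpl in HN. lra.
Qed.

Lemma ln_INR_pos m : (2 <= m)%nat -> 0 < ln (INR m).
Proof.
  intro Hm. rewrite <- ln_1. apply ln_increasing; [lra|].
  apply (lt_INR 1) in Hm. simpl in Hm. lra.
Qed.

Lemma ln_INR_le_mul a A b :
  (1 <= a)%nat -> (a <= A * b)%nat -> ln (INR a) <= ln (INR A) + ln (INR b).
Proof.
  intros Ha Hab. rewrite <- ln_mult, <- mult_INR;
    [|apply (lt_INR 0); nia|apply (lt_INR 0); nia].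
  apply ln_le; [apply (lt_INR 0); lia|apply le_INR, Hab].
Qed.

Lemma ln_INR_succ_le n : (1 <= n)%nat -> ln (INR (S n)) <= ln 2 + ln (INR n).
Proof.
  intro Hn. apply (le_INR 1) in Hn. simpl in Hn.
  rewrite <- ln_mult by lra. apply ln_le; [rewrite S_INR; lra|]. rewrite S_INR. lra.
Qed.

Lemma eventually_le_mul_ln (K e : R) :
  0 < e -> exists M, forall n, (M <= n)%nat -> K <= e * ln (INR n).
Proof.
  intro He. destruct (INR_unbounded (exp (K / e))) as [M HM].
  exists M. intros n Hn. apply le_INR in Hn.
  assert (HKe : K / e < ln (INR n)).
  { rewrite <- (ln_exp (K / e)). apply ln_increasing; [apply exp_pos|lra]. }
  apply (Rmult_lt_compat_l e) in HKe; [|exact He].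
  replace (e * (K / e)) with K in HKe by (field; lra). lra.
Qed.

Lemma LimSup_ln_ratio_le (a b : nat -> nat) (A : nat) (D : R) :
  (forall n, (1 <= a n)%nat) -> (forall n, (a n <= A * b (S n))%nat) ->
  Rbar_le (LimSup_seq (fun n => ln (INR (b n)) / ln (INR n))) D ->
  Rbar_le (LimSup_seq (fun n => ln (INR (a n)) / ln (INR n))) D.
Proof.
  intros Ha Hab Hb. apply LimSup_seq_le_of_eventually. intros eps Heps.
  set (e := eps / 2).
  assert (He : 0 < e) by (unfold e; lra).
  assert (Hb1 : forall n, (1 <= b (S n))%nat) by (intro n; specialize (Ha n); specialize (Hab n); nia).
  destruct (eventually_lt_of_LimSup_seq_le _ _ Hb e He) as [N HN].
  assert (HDe : 0 < D + e).
  { specialize (HN (S (S N)) ltac:(lia)). cbv beta in HN.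
    enough (0 <= ln (INR (b (S (S N)))) / ln (INR (S (S N)))) by lra.
    apply Rdiv_le_0_compat; [|apply ln_INR_pos; lia].
    rewrite <- ln_1. apply ln_le; [lra|]. apply (le_INR 1), Hb1. }
  destruct (eventually_le_mul_ln (ln (INR A) + (D + e) * ln 2) e He) as [M HM].
  exists (Nat.max (Nat.max N M) 2). intros n Hn.
  assert (Hlnn : 0 < ln (INR n)) by (apply ln_INR_pos; lia).
  apply Rle_div_l; [exact Hlnn|].
  pose proof (ln_INR_le_mul _ _ _ (Ha n) (Hab n)) as Hlna.
  assert (Hlnb : ln (INR (b (S n))) < (D + e) * ln (INR (S n))).
  { apply Rlt_div_l; [apply ln_INR_pos; lia|]. apply HN. lia. }
  pose proof (ln_INR_succ_le n ltac:(lia)) as Hsucc.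
  pose proof (HM n ltac:(lia)) as HMn.
  assert ((D + e) * ln (INR (S n)) <= (D + e) * (ln 2 + ln (INR n)))
    by (apply Rmult_le_compat_l; lra).
  replace eps with (e + e) by (unfold e; field). nra.
Qed.

Theorem mainTheorem5 (V : Type) (adj : V -> V -> Prop) (v : nat) (D : R)
  (l0 : nat) :
  simple_graph adj ->
  infinite_type V ->
  connected_graph adj ->
  degree_bounded adj v ->
  has_internal_scaling_dim adj D ->
  (1 <= l0)%nat ->
  forall C : V -> Prop, is_clique adj C ->
    Rbar_le (upper_DS (purified_clique_adj adj l0) C) (Finite D).
Proof.
  intros _ Hinf _ Hdeg Hdim Hl0 C HC.
  assert (HV : inhabited V).
  { apply NNPP. intro Hempty. apply Hinf. exists nil. intro x. apply Hempty. now constructor. }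
  destruct (clique_inhabited V adj C HV HC) as [x0 Cx0].
  apply (LimSup_ln_ratio_le _ (fun n => ncard (ball_n adj x0 n)) (2 ^ S v)).
  - intro n. destruct (purified_ball_listed V adj l0 v C x0 n Hl0 Hdeg HC Cx0) as [L [_ HL]].
    apply (ncard_pos _ C); [now exists L|apply reach_refl].
  - intro n. destruct (purified_ball_listed V adj l0 v C x0 n Hl0 Hdeg HC Cx0) as [L [HLlen HL]].
    rewrite Nat.mul_comm. eapply Nat.le_trans; [apply (ncard_le_length L _ HL)|exact HLlen].
  - change (Rbar_le (upper_DS adj x0) D). rewrite (proj2 (Hdim x0)). simpl. lra.
Qed.
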